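(* Let $\Sigma=(\mathcal F_\Sigma;\mathcal P_\Sigma)$ be a discrete signature and $\varphi$ a formula over $\Sigma$. Then one can compute the following data: <ul> <li>natural numbers $n,m$;</li> <li>a signature $\Sigma_{n,m}=(\mathrm{Fin}\,n;\mathrm{Fin}\,m)$;</li> <li>arity-preserving maps $\mathrm{Fin}\,n\to\mathcal F_\Sigma$ and $\mathrm{Fin}\,m\to\mathcal P_\Sigma$;</li> <li>a formula $\psi$ over $\Sigma_{n,m}$.</li> </ul> These satisfy $\mathsf{FSAT}(\Sigma)\,\varphi\leftrightarrow\mathsf{FSAT}(\Sigma_{n,m})\,\psi$.
   Context: We work in constructive type theory, where ''one can compute'' means the data is constructed (in $\mathsf{Type}$). A signature consists of a type of function symbols and a type of relation symbols, each with an arity. It is discrete if both types have decidable equality. $\mathrm{Fin}\,k$ is the finite type $\{0,\dots,k-1\}$. A map between symbol types is arity preserving if each symbol has the same arity as its image. A type is finite if some list contains all of its elements. Formulas are first-order formulas built from $\dot\bot$, atoms, $\dot\to,\dot\land,\dot\lor,\dot\forall,\dot\exists$. A model over a domain $D$ interprets function symbols as functions $D^{|f|}\to D$ and relation symbols as predicates $D^{|P|}\to\mathbb P$, with Tarski satisfaction. The model is decidable if every relation interpretation is decidable. $\mathsf{FSAT}(\Sigma)\,\varphi$ holds iff some finite type $D$, decidable model over $D$ and assignment $\rho$ satisfy $\varphi$. *)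

From Stdlib Require Import List Vector Fin.

Set Implicit Arguments.

Record signature : Type := Signature {
  syms : Type;
  ar_syms : syms -> nat;
  rels : Type;
  ar_rels : rels -> nat
}.

Definition discrete (Σ : signature) : Type :=
  ((forall x y : syms Σ, {x = y} + {x <> y}) *
   (forall x y : rels Σ, {x = y} + {x <> y}))%type.

Definition sig_fin (n m : nat) (af : Fin.t n -> nat) (ap : Fin.t m -> nat)
  : signature := Signature af ap.

Section Syntax.
Variable Σ : signature.

(* terms with de Bruijn variables *)
Inductive term : Type :=
  | var : nat -> term
  | func : forall f : syms Σ, Vector.t term (ar_syms Σ f) -> term.

Inductive form : Type :=
  | fal : form
  | atom : forall P : rels Σ, Vector.t term (ar_rels Σ P) -> form
  | imp : form -> form -> form
  | conj : form -> form -> form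
  | disj : form -> form -> form
  | all : form -> form
  | ex : form -> form.

Record model (D : Type) : Type := Model {
  fun_i : forall f : syms Σ, Vector.t D (ar_syms Σ f) -> D;
  rel_i : forall P : rels Σ, Vector.t D (ar_rels Σ P) -> Prop
}.

Definition model_dec (D : Type) (M : model D) : Type :=
  forall (P : rels Σ) (v : Vector.t D (ar_rels Σ P)), {rel_i M P v} + {~ rel_i M P v}.

Definition scons (D : Type) (d : D) (rho : nat -> D) : nat -> D :=
  fun k => match k with O => d | S k => rho k end.

Fixpoint eval (D : Type) (M : model D) (rho : nat -> D) (t : term) : D :=
  match t with
  | var k => rho k
  | func f v => fun_i M f (Vector.map (eval M rho) v)
  end.

Fixpoint sat (D : Type) (M : model D) (rho : nat -> D) (phi : form) : Prop :=
  match phi with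
  | fal => False
  | atom P v => rel_i M P (Vector.map (eval M rho) v)
  | imp a b => sat M rho a -> sat M rho b
  | conj a b => sat M rho a /\ sat M rho b
  | disj a b => sat M rho a \/ sat M rho b
  | all a => forall d : D, sat M (scons d rho) a
  | ex a => exists d : D, sat M (scons d rho) a
  end.

Definition finite (D : Type) : Prop := exists l : list D, forall x : D, List.In x l.

Definition FSAT (phi : form) : Prop :=
  exists (D : Type) (M : model D), finite D /\ inhabited (model_dec M) /\
    exists rho : nat -> D, sat M rho phi.

End Syntax.

(* Only the finitely many symbols occurring in φ matter.  Enumerating them as
   [Fin.t n] and [Fin.t m] (which needs decidable equality to locate a symbol in
   the enumeration) renames φ into a formula over the finite signature.  A model
   of φ yields a model of the renamed formula on the same domain by forgetting the
   other symbols (its reduct); conversely a model of the renamed formula expands to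
   a Σ-model interpreting every other function symbol as a constant and every other
   relation as empty, which keeps it decidable.  Both constructions agree with the
   model they come from on the enumerated symbols, so one satisfaction lemma for
   agreeing models gives both directions. *)

From Stdlib Require Import List Vector Fin.
Set Implicit Arguments.

Section FinFind.
Variable A : Type.
Variable dec : forall x y : A, {x = y} + {x <> y}.

Fixpoint fin_find {n : nat} : forall (g : Fin.t n -> A) (a : A), option {i : Fin.t n | g i = a} :=
  match n return forall (g : Fin.t n -> A) a, option {i : Fin.t n | g i = a} with
  | O => fun _ _ => None
  | S n' => fun g a =>
      match dec (g Fin.F1) a with
      | left e => Some (exist _ Fin.F1 e)
      | right _ =>
          match fin_find (fun i => g (Fin.FS i)) a with
          | Some (exist _ i e) => Some (exist (fun i => g i = a) (Fin.FS i) e)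
          | None => None
          end
      end
  end.

Lemma fin_find_complete n (g : Fin.t n -> A) a : (exists i, g i = a) -> fin_find g a <> None.
Proof.
  revert g; induction n as [|n IH]; intros g [i Hi]; [exact (Fin.case0 _ i)|].
  simpl; destruct (dec (g Fin.F1) a) as [e|Hne]; [discriminate|].
  destruct (fin_find (fun i => g (Fin.FS i)) a) as [[j e]|] eqn:Hfind; [discriminate|].
  revert Hi; apply (Fin.caseS' i); [contradiction|].
  intros j Hj _; exact (IH _ (ex_intro _ j Hj) Hfind).
Qed.
End FinFind.

Definition covers {A : Type} {n : nat} (g : Fin.t n -> A) (l : list A) : Prop :=
  forall a, List.In a l -> exists i, g i = a.

Lemma covers_incl A n (g : Fin.t n -> A) l1 l2 : incl l1 l2 -> covers g l2 -> covers g l1.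
Proof. intros Hincl Hcov a Ha; exact (Hcov a (Hincl a Ha)). Qed.

Lemma covers_app A n (g : Fin.t n -> A) l1 l2 : covers g (l1 ++ l2) -> covers g l1 /\ covers g l2.
Proof. split; apply covers_incl with (l1 ++ l2); auto using incl_appl, incl_appr, incl_refl. Qed.

Lemma covers_nth_of_list A (l : list A) : covers (Vector.nth (Vector.of_list l)) l.
Proof.
  induction l as [|x l IH]; intros a Ha; [destruct Ha|].
  destruct Ha as [<-|Ha]; [now exists Fin.F1|].
  destruct (IH a Ha) as [i Hi]; now exists (Fin.FS i).
Qed.

Definition cast_args {A X : Type} (ar : A -> nat) {a b : A} (e : a = b)
  : Vector.t X (ar b) -> Vector.t X (ar a) :=
  match e in _ = b' return Vector.t X (ar b') -> Vector.t X (ar a) with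
  | eq_refl => fun v => v
  end.

Lemma map_cast_args A X Y (ar : A -> nat) a b (e : a = b) (g : X -> Y) (v : Vector.t X (ar b)) :
  Vector.map g (cast_args ar e v) = cast_args ar e (Vector.map g v).
Proof. now destruct e. Qed.

Section Symbols.
Variable Σ : signature.

Fixpoint term_syms (t : term Σ) : list (syms Σ) :=
  match t with
  | var _ _ => List.nil
  | @func _ f v => f :: Vector.fold_right (fun s l => term_syms s ++ l) v List.nil
  end.

Fixpoint form_syms (φ : form Σ) : list (syms Σ) :=
  match φ with
  | fal _ => List.nil
  | @atom _ _ v => Vector.fold_right (fun s l => term_syms s ++ l) v List.nil
  | @imp _ a b | @conj _ a b | @disj _ a b => form_syms a ++ form_syms b
  | @all _ a | @ex _ a => form_syms a
  end.

Fixpoint form_rels (φ : form Σ) : list (rels Σ) :=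
  match φ with
  | fal _ => List.nil
  | @atom _ P _ => P :: List.nil
  | @imp _ a b | @conj _ a b | @disj _ a b => form_rels a ++ form_rels b
  | @all _ a | @ex _ a => form_rels a
  end.

Lemma incl_term_syms_args n (v : Vector.t (term Σ) n) s :
  Vector.In s v -> incl (term_syms s) (Vector.fold_right (fun s l => term_syms s ++ l) v List.nil).
Proof. induction 1; simpl; auto using incl_appl, incl_appr, incl_refl. Qed.

Fixpoint term_ind_in (P : term Σ -> Prop) (Hvar : forall k, P (var _ k))
  (Hfunc : forall f v, (forall s, Vector.In s v -> P s) -> P (func f v)) (t : term Σ) : P t :=
  match t with
  | var _ k => Hvar k
  | @func _ f v => Hfunc f v (proj1 (Vector.Forall_forall _ _ _ v)
      ((fix args n (w : Vector.t (term Σ) n) : Vector.Forall P w :=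
          match w with
          | Vector.nil _ => Vector.Forall_nil P
          | Vector.cons _ s _ w' => Vector.Forall_cons P s w' (term_ind_in P Hvar Hfunc s) (args _ w')
          end) _ v))
  end.
End Symbols.

Section Restriction.
Variable Σ : signature.
Variable dec_syms : forall f g : syms Σ, {f = g} + {f <> g}.
Variable dec_rels : forall P Q : rels Σ, {P = Q} + {P <> Q}.
Variables n m : nat.
Variable fs : Fin.t n -> syms Σ.
Variable ps : Fin.t m -> rels Σ.

Definition restr_sig : signature :=
  sig_fin (fun i => ar_syms Σ (fs i)) (fun j => ar_rels Σ (ps j)).

Fixpoint restr_term (t : term Σ) : term restr_sig :=
  match t with
  | var _ k => var _ k
  | @func _ f v =>
      match fin_find dec_syms fs f with
      | Some (exist _ i e) => func (Σ := restr_sig) i (cast_args (ar_syms Σ) e (Vector.map restr_term v))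
      | None => var _ 0 (* unreachable for symbols in the range of [fs] *)
      end
  end.

Fixpoint restr_form (φ : form Σ) : form restr_sig :=
  match φ with
  | fal _ => fal _
  | @atom _ P v =>
      match fin_find dec_rels ps P with
      | Some (exist _ j e) => atom (Σ := restr_sig) j (cast_args (ar_rels Σ) e (Vector.map restr_term v))
      | None => fal _
      end
  | @imp _ a b => imp (restr_form a) (restr_form b)
  | @conj _ a b => conj (restr_form a) (restr_form b)
  | @disj _ a b => disj (restr_form a) (restr_form b)
  | @all _ a => all (restr_form a)
  | @ex _ a => ex (restr_form a)
  end.

Definition agree (D : Type) (M' : model restr_sig D) (M : model Σ D) : Prop :=
  (forall f i (e : fs i = f) v, fin_find dec_syms fs f = Some (exist _ i e) ->
     fun_i M' i (cast_args (ar_syms Σ) e v) = fun_i M f v) /\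
  (forall P j (e : ps j = P) v, fin_find dec_rels ps P = Some (exist _ j e) ->
     (rel_i M' j (cast_args (ar_rels Σ) e v) <-> rel_i M P v)).

Section Agreement.
Variables (D : Type) (M' : model restr_sig D) (M : model Σ D).
Hypothesis HM : agree M' M.

Lemma eval_restr_term rho t :
  covers fs (term_syms t) -> eval M' rho (restr_term t) = eval M rho t.
Proof.
  induction t as [k|f v IH] using term_ind_in; intros Hcov; [reflexivity|].
  simpl; destruct (fin_find dec_syms fs f) as [[i e]|] eqn:Hfind.
  - simpl; rewrite map_cast_args, Vector.map_map, (proj1 HM _ _ _ _ Hfind).
    f_equal; apply Vector.map_ext_in; intros s Hs.
    apply IH; [exact Hs|].
    apply covers_incl with (2 := Hcov), incl_tl, incl_term_syms_args, Hs.
  - exfalso; exact (fin_find_complete dec_syms fs (Hcov f (or_introl eq_refl)) Hfind).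
Qed.

Lemma sat_restr_form rho φ :
  covers fs (form_syms φ) -> covers ps (form_rels φ) ->
  (sat M' rho (restr_form φ) <-> sat M rho φ).
Proof.
  revert rho; induction φ as [|P v|a IHa b IHb|a IHa b IHb|a IHa b IHb|a IHa|a IHa];
    intros rho Hf Hp; simpl in *.
  - tauto.
  - destruct (fin_find dec_rels ps P) as [[j e]|] eqn:Hfind.
    + simpl; rewrite map_cast_args, Vector.map_map.
      rewrite (Vector.map_ext_in _ _ (fun s => eval M' rho (restr_term s)) (eval M rho) _ v).
      * exact (proj2 HM _ _ _ _ Hfind).
      * intros s Hs; apply eval_restr_term, covers_incl with (2 := Hf), incl_term_syms_args, Hs.
    + exfalso; exact (fin_find_complete dec_rels ps (Hp P (or_introl eq_refl)) Hfind).
  - apply covers_app in Hf as [], Hp as []; rewrite IHa, IHb by assumption; tauto.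
  - apply covers_app in Hf as [], Hp as []; rewrite IHa, IHb by assumption; tauto.
  - apply covers_app in Hf as [], Hp as []; rewrite IHa, IHb by assumption; tauto.
  - now setoid_rewrite IHa.
  - now setoid_rewrite IHa.
Qed.
End Agreement.

Definition reduct (D : Type) (M : model Σ D) : model restr_sig D :=
  @Model restr_sig D (fun i => fun_i M (fs i)) (fun j => rel_i M (ps j)).

Definition expansion (D : Type) (d : D) (M : model restr_sig D) : model Σ D :=
  @Model Σ D
    (fun f v => match fin_find dec_syms fs f with
                | Some (exist _ i e) => fun_i M i (cast_args (ar_syms Σ) e v)
                | None => d
                end)
    (fun P v => match fin_find dec_rels ps P with
                | Some (exist _ j e) => rel_i M j (cast_args (ar_rels Σ) e v)
                | None => False
                end).

Lemma agree_reduct D (M : model Σ D) : agree (reduct M) M.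
Proof. split; intros ? ? e ? _; destruct e; reflexivity. Qed.

Lemma agree_expansion D (d : D) (M : model restr_sig D) : agree M (expansion d M).
Proof. split; intros ? ? ? ? Hfind; simpl; rewrite Hfind; reflexivity. Qed.

Lemma model_dec_reduct D (M : model Σ D) : model_dec M -> model_dec (reduct M).
Proof. intros HM j; apply HM. Qed.

Lemma model_dec_expansion D (d : D) (M : model restr_sig D) :
  model_dec M -> model_dec (expansion d M).
Proof.
  intros HM P v; simpl; destruct (fin_find dec_rels ps P) as [[j e]|]; [apply HM | tauto].
Qed.

Lemma FSAT_restr_form φ :
  covers fs (form_syms φ) -> covers ps (form_rels φ) -> (FSAT φ <-> FSAT (restr_form φ)).
Proof.
  intros Hf Hp; split; intros (D & M & Hfin & [Hdec] & rho & Hsat).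
  - exists D, (reduct M); repeat split; [exact Hfin | exact (model_dec_reduct Hdec) |].
    exists rho; now apply (sat_restr_form (agree_reduct M)).
  - exists D, (expansion (rho 0) M); repeat split; [exact Hfin | exact (model_dec_expansion _ Hdec) |].
    exists rho; now apply (sat_restr_form (agree_expansion (rho 0) M)).
Qed.
End Restriction.

Theorem lemma22 (Σ : signature) (HΣ : discrete Σ) (φ : form Σ) :
  { n : nat & { m : nat &
  { af : Fin.t n -> nat & { ap : Fin.t m -> nat &
  { fs : Fin.t n -> syms Σ & { ps : Fin.t m -> rels Σ &
  { ψ : form (sig_fin af ap) |
      (forall i : Fin.t n, af i = ar_syms Σ (fs i)) /\
      (forall j : Fin.t m, ap j = ar_rels Σ (ps j)) /\
      (FSAT φ <-> FSAT ψ) } } } } } } }.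
Proof.
  set (fs := Vector.nth (Vector.of_list (form_syms φ))).
  set (ps := Vector.nth (Vector.of_list (form_rels φ))).
  exists _, _, _, _, fs, ps, (restr_form (fst HΣ) (snd HΣ) fs ps φ).
  split; [reflexivity|]. split; [reflexivity|].
  apply FSAT_restr_form; apply covers_nth_of_list.
Qed.
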